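(* Let $m\ge 2$ and let $\Gamma$ be a strongly regular graph with smallest adjacency eigenvalue $-m$ which is not sporadic, i.e. $\Gamma$ is one of: (i) a complete multipartite graph $K_{a\times m}$ with $a\ge 2$ parts of size $m$; (ii) a Latin square graph $LS_m(n)$; (iii) the block graph of a Steiner system $S(2,m,mn+m-n)$. Then $E(\Gamma)=E(\bar\Gamma)$ if and only if $\Gamma\cong K_{m\times m}$ (imprimitive case) or $\Gamma$ is a Latin square graph $LS_m(n)$ for some $n\ge 2$ (primitive case).
   Context: A strongly regular graph with parameters $(n,k,e,d)$ is a $k$-regular simple graph on $n$ vertices, neither complete nor edgeless, in which adjacent vertices have $e$ common neighbours and distinct non-adjacent vertices have $d$ common neighbours. The Latin square graph $LS_m(n)$ is the graph of an orthogonal array $OA(n,m)$ (an $m\times n^2$ array over an $n$-set in which every pair of rows contains each ordered pair of symbols exactly once): vertices are the $n^2$ columns, two being adjacent iff they agree in exactly one row; it is strongly regular with parameters $(n^2, m(n-1), (m-1)(m-2)+n-2, m(m-1))$. The block graph of a Steiner system $S(2,m,v)$ has the blocks as vertices, two blocks adjacent iff they intersect. The energy $E(\Gamma)$ is the sum of the absolute values of the adjacency eigenvalues (with multiplicity); $\bar\Gamma$ is the complement. *)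

From mathcomp Require Import all_boot all_order all_algebra all_field.
Set Implicit Arguments. Unset Strict Implicit. Unset Printing Implicit Defensive.
Import Order.TTheory GRing.Theory Num.Theory.
Local Open Scope ring_scope.

Definition simple_graph (V : finType) (E : rel V) : Prop :=
  symmetric E /\ irreflexive E.

Definition compl_graph (V : finType) (E : rel V) : rel V :=
  fun x y => (x != y) && ~~ E x y.

Definition graph_iso (V W : finType) (E : rel V) (F : rel W) : Prop :=
  exists f : V -> W, bijective f /\ forall x y, F (f x) (f y) = E x y.

Definition is_srg (V : finType) (E : rel V) : Prop :=
  simple_graph E /\
  (exists x y, E x y) /\ (exists x y, (x != y) && ~~ E x y) /\
  exists k e d : nat,
    (forall x, #|[set y | E x y]| = k)%N /\
    (forall x y, E x y -> #|[set z | E x z && E y z]| = e)%N /\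
    (forall x y, x != y -> ~~ E x y -> #|[set z | E x z && E y z]| = d)%N.

Definition adjmx (V : finType) (E : rel V) : 'M[algC]_#|V| :=
  \matrix_(i, j) (E (enum_val i) (enum_val j))%:R.

Definition eigenvalues n (A : 'M[algC]_n) : seq algC :=
  sval (closed_field_poly_normal (char_poly A)).

Definition energy n (A : 'M[algC]_n) : algC :=
  \sum_(z <- eigenvalues A) `|z|.

Definition graph_energy (V : finType) (E : rel V) : algC := energy (adjmx E).

Definition smallest_eigenvalue n (A : 'M[algC]_n) (lam : algC) : Prop :=
  lam \in eigenvalues A /\ forall z, z \in eigenvalues A -> lam <= z.

Definition Kmult (a m : nat) : rel ('I_a * 'I_m) :=
  fun x y => x.1 != y.1.
Arguments Kmult : clear implicits.

(* orthogonal array OA(n,m): m rows, n^2 columns, symbols in 'I_n *)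
Definition is_OA (n m : nat) (O : 'I_m -> 'I_(n ^ 2) -> 'I_n) : Prop :=
  forall i j : 'I_m, i != j ->
    forall s t : 'I_n, exists! c : 'I_(n ^ 2), O i c = s /\ O j c = t.

Definition LS_graph (n m : nat) (O : 'I_m -> 'I_(n ^ 2) -> 'I_n) : rel 'I_(n ^ 2) :=
  fun c d => (c != d) && (#|[set i : 'I_m | O i c == O i d]| == 1)%N.

Definition steiner2 (m v : nat) (B : {set {set 'I_v}}) : Prop :=
  (forall b, b \in B -> #|b| = m) /\
  (forall x y : 'I_v, x != y -> exists! b, b \in B /\ x \in b /\ y \in b).

Definition blocks (v : nat) (B : {set {set 'I_v}}) := {b : {set 'I_v} | b \in B}.

Definition block_graph (v : nat) (B : {set {set 'I_v}}) : rel (blocks B) :=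
  fun b c => (b != c) && (val b :&: val c != set0).
Arguments block_graph : clear implicits.
Arguments block_graph {v} B.

From mathcomp Require Import all_boot all_order all_algebra all_field.
From mathcomp Require Import ring lra zify.
Set Implicit Arguments. Unset Strict Implicit. Unset Printing Implicit Defensive.
Import Order.TTheory GRing.Theory Num.Theory.
Local Open Scope ring_scope.

(* Let A be the adjacency matrix, J the all-ones matrix, N = |V| and (k, e, d)
   the parameters.  Testing A^2 = kI + eA + d(J - I - A) on an eigenvector for
   -m gives m^2 = (d - e) m + (k - d); with r := (k - d) / m this says
   (A - rI)(A + mI) = dJ.  Together with the count k (k - e - 1) = d (N - 1 - k),
   r is pinned down by r (m (N - 1) - k) = k (N - k - m): r = 0 for K_{a x m},
   and r = n - m both for LS_m(n) and for the block graph of S(2, m, mn + m - n).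

   The energy of a normal matrix annihilated by (A - k)(A - r)(A + m) is the
   trace of the quadratic interpolating |t| at k, r and -m; since tr A = 0 and
   tr A^2 = Nk this gives E = 2 m N k (1 + r) / ((k + m)(r + m)).  The
   complement J - I - A is annihilated by the cubic with roots N - 1 - k, m - 1
   and -1 - r, so the graph and its complement have the same energy iff
   k (N - k + r) = (N - 1 - k)(k + m).  This means a = m for K_{a x m}, holds
   for every LS_m(n), and for a block graph would force n (n + 1 - m) = 0
   although m <= n. *)

Section Similarity.
Variables (R : comUnitRingType) (n : nat) (P : 'M[R]_n).
Hypothesis P_unit : P \in unitmx.
Local Notation conj A := (invmx P *m A *m P).

Lemma mulmx_similar (A B : 'M[R]_n) : conj A *m conj B = conj (A *m B).
Proof. by rewrite !mulmxA -[_ *m P *m invmx P]mulmxA mulmxV // mulmx1. Qed.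

Lemma subr_scalar_similar (A : 'M[R]_n) (a : R) : conj A - a%:M = conj (A - a%:M).
Proof.
by rewrite mulmxBr mulmxBl scalar_mxC -[a%:M *m _ *m P]mulmxA mulVmx // mulmx1.
Qed.

Lemma char_poly_similar (A : 'M[R]_n) : char_poly (conj A) = char_poly A.
Proof.
rewrite /char_poly /char_poly_mx.
have -> : 'X%:M - map_mx polyC (conj A) =
    map_mx polyC (invmx P) *m ('X%:M - map_mx polyC A) *m map_mx polyC P.
  rewrite mulmxBr mulmxBl -!map_mxM; congr (_ - _).
  by rewrite scalar_mxC -mulmxA -map_mxM mulVmx // map_mx1 mulmx1.
by rewrite !det_mulmx mulrC mulrA -det_mulmx -map_mxM mulmxV // map_mx1 det1 mul1r.
Qed.

Lemma mxtrace_similar (A : 'M[R]_n) : \tr (conj A) = \tr A.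
Proof. by rewrite mxtrace_mulC mulmxA mulmxV // mul1mx. Qed.

End Similarity.

Lemma eigenvalues_diag n (d : 'rV[algC]_n) :
  perm_eq (eigenvalues (diag_mx d)) [seq d 0 i | i <- enum 'I_n].
Proof.
apply: prod_XsubC_eq; rewrite /eigenvalues; case: closed_field_poly_normal => /= s.
rewrite (monicP (char_poly_monic _)) scale1r => <-.
rewrite char_poly_trig ?diag_mx_is_trig // big_map big_enum /=.
by apply: eq_bigr => i _; rewrite mxE eqxx mulr1n.
Qed.

Lemma diag_subr_scalar (R : zmodType) n (d : 'rV[R]_n) (t : R) :
  diag_mx d - t%:M = diag_mx (d - const_mx t).
Proof.
apply/matrixP => i j; rewrite !mxE.
by case: eqVneq => _; rewrite ?mulr1n ?mulr0n ?subr0.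
Qed.

Lemma energy_quadratic_interp n (A : 'M[algC]_n) (t1 t2 t3 a b c : algC) :
  A \is normalmx -> (A - t1%:M) *m (A - t2%:M) *m (A - t3%:M) = 0 ->
  (forall t, t \in [:: t1; t2; t3] -> a + b * t + c * t ^+ 2 = `|t|) ->
  energy A = a *+ n + b * \tr A + c * \tr (A *m A).
Proof.
move=> /orthomx_spectralP; set P := spectralmx A; set d := spectral_diag A.
have Pu : P \in unitmx := spectral_unit A.
move=> defA A_ann interp.
have root_d i : d 0 i \in [:: t1; t2; t3].
  move: A_ann; rewrite defA !subr_scalar_similar // !mulmx_similar //.
  move/(congr1 (fun M => P *m M *m invmx P)); rewrite mulmx0 mul0mx.
  rewrite !mulmxA mulmxV // mul1mx -mulmxA mulmxV // mulmx1.
  rewrite !diag_subr_scalar !mulmx_diag => /matrixP/(_ i i).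
  rewrite !mxE eqxx mulr1n => /eqP; rewrite !mulf_eq0 !subr_eq0 !inE.
  by rewrite orbA.
rewrite /energy defA /eigenvalues char_poly_similar // -/(eigenvalues _).
rewrite (perm_big _ (eigenvalues_diag d)) big_map big_enum /=.
under eq_bigr do rewrite -(interp _ (root_d _)).
rewrite mulmx_similar // !mxtrace_similar // mulmx_diag !mxtrace_diag.
rewrite !big_split /= sumr_const card_ord -!mulr_sumr.
by congr (_ + _ + _); congr (_ * _); apply: eq_bigr => i _; rewrite !mxE.
Qed.

Lemma energy_three_eigenvalues n (A : 'M[algC]_n) (k r s : algC) :
  A \is normalmx -> \tr A = 0 -> \tr (A *m A) = n%:R * k ->
  (A - k%:M) *m (A - r%:M) *m (A - s%:M) = 0 -> 0 <= k -> 0 <= r -> s < 0 ->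
  energy A = - 2 * s * n%:R * k * (1 + r) / ((k - s) * (r - s)).
Proof.
move=> A_normal trA trA2 A_ann k_ge0 r_ge0 s_lt0.
have ks_neq0 : k - s != 0 by rewrite subr_eq0 gt_eqF ?(lt_le_trans s_lt0).
have rs_neq0 : r - s != 0 by rewrite subr_eq0 gt_eqF ?(lt_le_trans s_lt0).
(* [|t| = t + c (t - k) (t - r)] at [t = k, r, s] *)
set c := - 2 * s / ((k - s) * (r - s)).
rewrite (@energy_quadratic_interp _ _ k r s (c * k * r) (1 - c * (k + r)) c) //.
  by rewrite trA trA2 /c -mulr_natr; field; rewrite rs_neq0.
move=> t; rewrite !inE => /or3P[] /eqP->.
- by rewrite ger0_norm // /c; field; rewrite rs_neq0.
- by rewrite ger0_norm // /c; field; rewrite rs_neq0.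
- by rewrite ltr0_norm // /c; field; rewrite rs_neq0.
Qed.

Lemma eigenvalues_eigenvalue n (A : 'M[algC]_n) (t : algC) :
  t \in eigenvalues A -> eigenvalue A t.
Proof.
rewrite eigenvalue_root_char /eigenvalues; case: closed_field_poly_normal => s /= ->.
by rewrite (monicP (char_poly_monic A)) scale1r root_prod_XsubC.
Qed.

Lemma card_set_sumb (T : finType) (P : pred T) : #|[set x | P x]| = (\sum_x P x)%N.
Proof.
by rewrite -sum1_card big_mkcond; apply: eq_bigr => x _; rewrite inE; case: (P x).
Qed.

Lemma sum_enum_val (R : nmodType) (T : finType) (F : T -> R) :
  \sum_(i < #|T|) F (enum_val i) = \sum_x F x.
Proof. by rewrite (reindex _ (onW_bij _ (enum_val_bij T))). Qed.

Local Notation J n := (const_mx 1 : 'M[algC]_n).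

Lemma const_mx1_mul n : J n *m J n = n%:R *: J n.
Proof.
apply/matrixP => i j; rewrite !mxE mulr1.
by under eq_bigr do rewrite !mxE mulr1; rewrite sumr_const card_ord.
Qed.

Section RegularGraph.
Variables (V : finType) (E : rel V) (k : nat).
Hypothesis E_simple : simple_graph E.
Hypothesis E_regular : forall x, #|[set y | E x y]| = k.
Local Notation A := (adjmx E).
Local Notation N := #|V|.

Lemma adjmx_normal : A \is normalmx.
Proof.
apply/normalmxP; suff -> : (A ^t*)%sesqui = A by [].
by apply/matrixP => i j; rewrite !mxE conjC_nat (proj1 E_simple).
Qed.

Lemma adjmx_trace : \tr A = 0.
Proof. by apply: big1 => i _; rewrite mxE (proj2 E_simple). Qed.

Lemma adjmx_sqr_entry i j :
  (A *m A) i j = #|[set z | E (enum_val i) z && E (enum_val j) z]|%:R.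
Proof.
rewrite mxE card_set_sumb natr_sum.
rewrite -(sum_enum_val (fun z => (E (enum_val i) z && E (enum_val j) z)%:R)).
by apply: eq_bigr => l _; rewrite !mxE -natrM mulnb (proj1 E_simple _ (enum_val j)).
Qed.

Lemma adjmx_trace_sqr : \tr (A *m A) = N%:R * k%:R.
Proof.
have neighb2 x : [set z | E x z && E x z] = [set z | E x z].
  by apply/setP => z; rewrite !inE andbb.
rewrite /mxtrace; under eq_bigr do rewrite adjmx_sqr_entry neighb2 E_regular.
by rewrite sumr_const card_ord mulr_natl.
Qed.

Lemma adjmx_mul_const_mx1 : A *m J N = k%:R *: J N.
Proof.
apply/matrixP => i j; rewrite !mxE mulr1 -(E_regular (enum_val i)) card_set_sumb.
rewrite natr_sum -(sum_enum_val (fun z => (E (enum_val i) z)%:R)).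
by apply: eq_bigr => l _; rewrite !mxE mulr1.
Qed.

Lemma const_mx1_mul_adjmx : J N *m A = k%:R *: J N.
Proof.
apply/matrixP => i j; rewrite !mxE mulr1 -(E_regular (enum_val j)) card_set_sumb.
rewrite natr_sum -(sum_enum_val (fun z => (E (enum_val j) z)%:R)).
by apply: eq_bigr => l _; rewrite !mxE mul1r (proj1 E_simple).
Qed.

Lemma adjmx_compl : adjmx (compl_graph E) = J N - 1%:M - A.
Proof.
apply/matrixP => i j; rewrite !mxE /compl_graph (inj_eq enum_val_inj).
case: eqVneq => [->|_]; first by rewrite (proj2 E_simple) subrr subr0.
by case: (E _ _); rewrite /= mulr0n subr0 ?subrr ?subr0.
Qed.

Lemma compl_graph_simple : simple_graph (compl_graph E).
Proof.
split=> [x y|x]; last by rewrite /compl_graph eqxx.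
by rewrite /compl_graph eq_sym (proj1 E_simple).
Qed.

Lemma compl_graph_regular x : #|[set y | compl_graph E x y]| = (N - 1 - k)%N.
Proof.
have -> : [set y | compl_graph E x y] = ~: (x |: [set y | E x y]).
  by apply/setP => y; rewrite !inE /compl_graph negb_or eq_sym.
rewrite cardsCs setCK cardsU1 inE (proj2 E_simple) E_regular /=; lia.
Qed.

Lemma regular_graph_energy (r s c : algC) :
  (A - r%:M) *m (A - s%:M) = c *: J N -> 0 <= r -> s < 0 ->
  graph_energy E = - 2 * s * N%:R * k%:R * (1 + r) / ((k%:R - s) * (r - s)).
Proof.
move=> A_quad r_ge0 s_lt0; apply: energy_three_eigenvalues => //.
- exact: adjmx_normal.
- exact: adjmx_trace.
- exact: adjmx_trace_sqr.
- rewrite -mulmxA A_quad -scalemxAr mulmxBl adjmx_mul_const_mx1 mul_scalar_mx.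
  by rewrite subrr scaler0.
Qed.

Lemma adjmx_compl_quad (r s c : algC) :
  (A - r%:M) *m (A - s%:M) = c *: J N ->
  (adjmx (compl_graph E) - (- 1 - s)%:M) *m (adjmx (compl_graph E) - (- 1 - r)%:M)
    = (N%:R - 2 * k%:R + r + s + c) *: J N.
Proof.
move=> A_quad; rewrite adjmx_compl.
have shift t : J N - 1%:M - A - (- 1 - t)%:M = J N - (A - t%:M).
  by apply/matrixP => i j; rewrite !mxE; ring.
have A_comm : comm_mx (A - s%:M) (A - r%:M).
  apply: comm_mxB (comm_mx_scalar _ _).
  exact/comm_mx_sym/comm_mxB/comm_mx_scalar.
rewrite !shift mulmxBl [J N *m _]mulmxBr [(A - s%:M) *m _]mulmxBr A_comm A_quad.
rewrite mulmxBr mulmxBl const_mx1_mul adjmx_mul_const_mx1 const_mx1_mul_adjmx.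
rewrite mul_mx_scalar mul_scalar_mx.
by apply/matrixP => i j; rewrite !mxE; ring.
Qed.

End RegularGraph.

Lemma eq_iff_scaled (R : idomainType) (x y u v c : R) :
  c != 0 -> x - y = c * (u - v) -> x = y <-> u = v.
Proof.
move=> c_neq0 xy; split=> [/eqP|uv]; last by apply/eqP; rewrite -subr_eq0 xy uv subrr mulr0.
by rewrite -subr_eq0 xy mulf_eq0 (negbTE c_neq0) subr_eq0 => /eqP.
Qed.

Section StronglyRegularGraph.
Variables (V : finType) (E : rel V) (k e d : nat).
Hypothesis E_simple : simple_graph E.
Hypothesis E_regular : forall x, #|[set y | E x y]| = k.
Hypothesis E_adj_common : forall x y, E x y -> #|[set z | E x z && E y z]| = e.
Hypothesis E_nonadj_common :
  forall x y, x != y -> ~~ E x y -> #|[set z | E x z && E y z]| = d.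
Local Notation A := (adjmx E).
Local Notation N := #|V|.
Let A_J := adjmx_mul_const_mx1 E_regular.

Lemma adjmx_srg_sqr : A *m A = k%:R%:M + e%:R *: A + d%:R *: (J N - 1%:M - A).
Proof.
apply/matrixP => i j; rewrite adjmx_sqr_entry // !mxE.
have [<-|ij] := eqVneq i j.
  have -> : [set z | E (enum_val i) z && E (enum_val i) z] = [set z | E (enum_val i) z].
    by apply/setP => z; rewrite !inE andbb.
  by rewrite E_regular (proj2 E_simple) /=; ring.
have ij' : enum_val i != enum_val j by rewrite (inj_eq enum_val_inj).
case Eij: (E _ _); first by rewrite E_adj_common // /=; ring.
by rewrite E_nonadj_common ?Eij // /=; ring.
Qed.

Lemma srg_param_count (x0 : V) :
  k%:R ^+ 2 = k%:R + e%:R * k%:R + d%:R * (N%:R - 1 - k%:R) :> algC.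
Proof.
have := congr1 (mulmx^~ (J N)) adjmx_srg_sqr.
rewrite /= -mulmxA A_J -scalemxAr A_J scalerA.
rewrite !mulmxDl -!scalemxAl !mulmxBl mul_scalar_mx A_J mul1mx.
rewrite const_mx1_mul => /matrixP/(_ (enum_rank x0) (enum_rank x0)); rewrite !mxE => kk.
by rewrite expr2 -[k%:R * k%:R]mulr1 kk; ring.
Qed.

Lemma srg_eigenvalue_eq (t : algC) : t \in eigenvalues A -> t != k%:R ->
  t ^+ 2 = (e%:R - d%:R) * t + (k%:R - d%:R).
Proof.
move=> /eigenvalues_eigenvalue/eigenvalueP[v Av v_neq0] t_neq_k.
have [j vj_neq0] : exists j, v 0 j != 0.
  apply/existsP; apply: contraR v_neq0 => /existsPn v0.
  by apply/eqP/rowP => j; rewrite mxE; apply/eqP/negbNE/v0.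
have vJ : v *m J N = 0.
  have : (k%:R - t) *: (v *m J N) = 0.
    by rewrite scalerBl scalemxAr -A_J mulmxA Av -scalemxAl subrr.
  by move/eqP; rewrite scaler_eq0 subr_eq0 eq_sym (negbTE t_neq_k) => /eqP.
have := congr1 (mulmx v) adjmx_srg_sqr.
rewrite mulmxA Av -scalemxAl Av scalerA !mulmxDr -!scalemxAr !mulmxBr.
rewrite mul_mx_scalar Av vJ mulmx1 => /matrixP/(_ 0 j)/eqP; rewrite !mxE -subr_eq0.
move=> /eqP vA2; apply/eqP; rewrite -subr_eq0; apply/eqP.
by apply: (mulIf vj_neq0); rewrite mul0r -vA2; ring.
Qed.

Variable m : nat.
Hypothesis m_gt0 : (0 < m)%N.
Hypothesis m_eigen : - m%:R \in eigenvalues A.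

Lemma srg_eigenvalueN_eq : m%:R ^+ 2 = (d%:R - e%:R) * m%:R + (k%:R - d%:R) :> algC.
Proof.
rewrite -sqrrN (srg_eigenvalue_eq m_eigen); first by ring.
by rewrite lt_eqF // (@lt_le_trans _ _ 0) ?oppr_lt0 ?ltr0n.
Qed.

Lemma srg_restricted_eigenvalue (x0 : V) :
  (k%:R - d%:R) * (m%:R * (N%:R - 1) - k%:R) = m%:R * k%:R * (N%:R - k%:R - m%:R) :> algC.
Proof.
apply/eqP; rewrite -subr_eq0; apply/eqP.
have count := srg_param_count x0; have eig := srg_eigenvalueN_eq.
(* the difference is [k] times [eig] plus [m] times [count] *)
transitivity (k%:R * (m%:R ^+ 2 - ((d%:R - e%:R) * m%:R + (k%:R - d%:R)))
  + m%:R * (k%:R ^+ 2 - (k%:R + e%:R * k%:R + d%:R * (N%:R - 1 - k%:R))) : algC).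
  by ring.
by rewrite -count -eig !subrr; ring.
Qed.

Lemma srg_adjmx_quad (r : algC) : k%:R - d%:R = m%:R * r ->
  (A - r%:M) *m (A - (- m%:R)%:M) = d%:R *: J N.
Proof.
move=> kd; have m_neq0 : m%:R != 0 :> algC by rewrite pnatr_eq0 -lt0n.
have k_eq : k%:R = d%:R + m%:R * r :> algC by rewrite -kd; ring.
have e_eq : e%:R = d%:R + r - m%:R :> algC.
  apply: (mulIf m_neq0); apply/eqP; rewrite -subr_eq0; apply/eqP.
  transitivity (m%:R ^+ 2 - ((d%:R - e%:R) * m%:R + (k%:R - d%:R)) : algC).
    by rewrite k_eq; ring.
  by rewrite -srg_eigenvalueN_eq subrr.
rewrite mulmxBl !mulmxBr adjmx_srg_sqr mul_mx_scalar mul_scalar_mx mul_scalar_mx.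
by apply/matrixP => i j; rewrite !mxE k_eq e_eq; ring.
Qed.

Lemma srg_energy_compl_iff (r : algC) : (k.+2 <= N)%N ->
  r * (m%:R * (N%:R - 1) - k%:R) = k%:R * (N%:R - k%:R - m%:R) -> 0 <= r ->
  graph_energy E = graph_energy (compl_graph E) <->
  k%:R * (N%:R - k%:R + r) = (N%:R - 1 - k%:R) * (k%:R + m%:R).
Proof.
move=> k2_le_N r_def r_ge0.
have /card_gt0P[x0 _] : (0 < N)%N by apply: leq_ltn_trans k2_le_N.
have D_neq0 : m%:R * (N%:R - 1) - k%:R != 0 :> algC.
  have -> : m%:R * (N%:R - 1) - k%:R = (m * (N - 1) - k)%:R :> algC.
    by rewrite natrB ?natrM ?natrB //; nia.
  by rewrite pnatr_eq0; nia.
have kd : k%:R - d%:R = m%:R * r.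
  apply: (mulIf D_neq0); rewrite srg_restricted_eigenvalue // -[in RHS]mulrA r_def; ring.
have A_quad := srg_adjmx_quad kd.
have kbar : (N - 1 - k)%:R = N%:R - 1 - k%:R :> algC by rewrite !natrB //; lia.
have m_ge1 : 1 <= m%:R :> algC by rewrite ler1n.
rewrite (regular_graph_energy E_simple E_regular A_quad) ?oppr_lt0 ?ltr0n //.
rewrite (regular_graph_energy (compl_graph_simple E_simple)
  (compl_graph_regular E_simple E_regular) (adjmx_compl_quad E_simple E_regular A_quad));
  last 2 first.
- by rewrite opprK addrC subr_ge0.
- by rewrite -opprD oppr_lt0 (lt_le_trans ltr01) // lerDl.
have m_pos : 0 < m%:R :> algC by rewrite ltr0n.
have N_pos : 0 < N%:R :> algC by rewrite ltr0n; lia.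
have r1_pos : 0 < 1 + r by rewrite (lt_le_trans ltr01) // lerDl.
have mr_pos : 0 < m%:R + r by rewrite (lt_le_trans m_pos) // lerDl.
have km_pos : 0 < k%:R + m%:R :> algC by rewrite -natrD ltr0n; lia.
have Nkr_pos : 0 < N%:R - k%:R + r.
  by rewrite (@lt_le_trans _ _ (N%:R - k%:R)) ?lerDl // subr_gt0 ltr_nat; lia.
(* the difference of the energies is a positive multiple of that of the two sides *)
apply: (@eq_iff_scaled _ _ _ _ _ (2 * m%:R * N%:R * (1 + r)
  / ((k%:R + m%:R) * (m%:R + r) * (N%:R - k%:R + r)))).
  by rewrite gt_eqF // divr_gt0 // !mulr_gt0 // ltr0n.
by rewrite kbar; field; rewrite !gt_eqF.
Qed.

End StronglyRegularGraph.

Section Counting.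
Local Close Scope ring_scope.

Section GraphIso.
Variables (V W : finType) (E : rel V) (F : rel W).
Hypothesis EF : graph_iso E F.

Lemma graph_iso_card : #|V| = #|W|.
Proof. by case: EF => f [f_bij _]; exact: bij_eq_card f_bij. Qed.

Lemma graph_iso_regular k :
  (forall y, #|[set z | F y z]| = k) -> forall x, #|[set z | E x z]| = k.
Proof.
case: EF => f [f_bij Ef] F_reg x; rewrite -(F_reg (f x)).
have -> : [set z | F (f x) z] = f @: [set z | E x z].
  apply/setP => z; case: f_bij => g fK gK; rewrite inE.
  apply/idP/imsetP => [Fz|[w]]; last by rewrite inE => Ew ->; rewrite Ef.
  by exists (g z); rewrite ?inE -?Ef gK.
by rewrite card_imset //; exact: bij_inj.
Qed.

End GraphIso.

Lemma regular_nonadj_card (V : finType) (E : rel V) k x y :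
  simple_graph E -> (forall x, #|[set z | E x z]| = k) -> x != y -> ~~ E x y ->
  k.+2 <= #|V|.
Proof.
move=> [_ E_irr] E_reg xy nExy.
have : [set z | E x z] \subset ~: [set x; y].
  apply/subsetP => z; rewrite !inE negb_or => Exz.
  by apply/andP; split; apply: contraTneq Exz => ->; rewrite ?E_irr.
move/subset_leq_card; rewrite E_reg.
by have := cardsC [set x; y]; rewrite cards2 xy => <-; lia.
Qed.

Lemma Kmult_card a m : #|{: 'I_a * 'I_m}| = a * m.
Proof. by rewrite card_prod !card_ord. Qed.

Lemma Kmult_regular a m (x : 'I_a * 'I_m) : #|[set y | Kmult a m x y]| = (a - 1) * m.
Proof.
have -> : [set y | Kmult a m x y] = setX [set~ x.1] setT.
  by apply/setP => y; rewrite !inE /Kmult andbT eq_sym.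
by rewrite cardsX cardsC1 cardsT !card_ord subn1.
Qed.

Section OrthogonalArray.
Variables (n m : nat) (O : 'I_m -> 'I_(n ^ 2) -> 'I_n).
Hypothesis O_OA : is_OA O.

Lemma OA_col_eq (i j : 'I_m) c c' :
  i != j -> O i c = O i c' -> O j c = O j c' -> c = c'.
Proof.
move=> ij Oi Oj; have [c0 [_ c0_uniq]] := O_OA ij (O i c) (O j c).
by rewrite -(c0_uniq c) ?(c0_uniq c') -?Oi -?Oj.
Qed.

Hypothesis m_ge2 : 1 < m.

Lemma OA_row_card (i : 'I_m) s : #|[set c | O i c == s]| = n.
Proof.
have /card_gt0P[j] : 0 < #|[set~ i]| by rewrite cardsC1 card_ord; lia.
rewrite !inE eq_sym => ij.
rewrite -(card_in_imset (f := O j)); last first.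
  by move=> c c'; rewrite !inE => /eqP Oic /eqP Oic'; apply: OA_col_eq ij _; rewrite Oic.
suff -> : O j @: [set c | O i c == s] = setT by rewrite cardsT card_ord.
apply/setP => t; rewrite inE; have [c [[Oic Ojc] _]] := O_OA ij s t.
by apply/imsetP; exists c; rewrite ?inE ?Oic.
Qed.

Lemma LS_graph_regular c : #|[set c' | LS_graph O c c']| = m * (n - 1).
Proof.
(* distinct columns agree in at most one row, so the neighbours of [c] are
   counted row by row *)
have agree_le1 c' : c != c' -> #|[set i | O i c == O i c']| <= 1.
  move=> cc'; apply/card_le1_eqP => i j; rewrite !inE => /eqP Oi /eqP Oj.
  by apply: contraNeq cc' => ij; rewrite (OA_col_eq ij Oj Oi).
rewrite card_set_sumb.
transitivity (\sum_c' \sum_i ((c != c') && (O i c == O i c') : nat)).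
  apply: eq_bigr => c' _; rewrite /LS_graph.
  have [<-|cc'] /= := eqVneq c c'; first by rewrite big1.
  by move: (agree_le1 c' cc'); rewrite card_set_sumb; case: (\sum_i _) => [|[]].
rewrite exchange_big /= -[m in RHS]card_ord -sum_nat_const; apply: eq_bigr => i _.
have := OA_row_card i (O i c); rewrite card_set_sumb (bigD1 c) //= eqxx /=.
set row_c := (\sum_(_ < _ | _) _)%N => row_n.
rewrite (bigD1 c) //= eqxx /= add0n; transitivity row_c; last by lia.
by apply: eq_bigr => c' cc'; rewrite eq_sym cc' eq_sym.
Qed.

End OrthogonalArray.

Section SteinerSystem.
Variables (m n v : nat) (B : {set {set 'I_v}}).
Hypothesis m_ge2 : 1 < m.
Hypothesis B_steiner : steiner2 m B.
Hypothesis v_eq : v - 1 = (m - 1) * n.+1.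

Lemma steiner_block_eq b c x y : b \in B -> c \in B -> x != y ->
  x \in b -> y \in b -> x \in c -> y \in c -> b = c.
Proof.
move=> bB cB xy xb yb xc yc; have [_ /(_ x y xy)[b0 [_ b0_uniq]]] := B_steiner.
by rewrite -(b0_uniq b) ?(b0_uniq c).
Qed.

Lemma steiner_pair_sum x y : x != y ->
  \sum_b ((b \in B) && (x \in b) && (y \in b) : nat) = 1.
Proof.
move=> xy; have [_ /(_ x y xy)[b0 [[b0B [xb0 yb0]] b0_uniq]]] := B_steiner.
rewrite (bigD1 b0) ?b0B ?xb0 ?yb0 //= big1 // => b bb0.
apply/eqP; rewrite eqb0; apply: contra bb0 => /andP[/andP[bB xb] yb].
by rewrite (b0_uniq b).
Qed.

(* double counting of the pairs [(y, b)] with [x != y] and [x, y \in b] *)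
Lemma steiner_replication x : #|[set b | (b \in B) && (x \in b)]| = n.+1.
Proof.
set Bx := [set b | (b \in B) && (x \in b)].
have count : #|[set~ x]| = \sum_(b in Bx) (m - 1).
  rewrite card_set_sumb.
  transitivity (\sum_y \sum_(b in Bx) ((y \in b) && (y != x) : nat)).
    apply: eq_bigr => y _; rewrite !inE.
    have [->|yx] /= := eqVneq y x; first by rewrite big1 // => b _; rewrite andbF.
    rewrite -(steiner_pair_sum (x := x) (y := y)) 1?eq_sym // [in RHS]big_mkcond /=.
    apply: eq_bigr => b _; rewrite inE andbT.
    by case: (b \in B); case: (x \in b); case: (y \in b).
  rewrite exchange_big /=; apply: eq_bigr => b; rewrite inE => /andP[bB xb].
  rewrite -(proj1 B_steiner b bB) (cardsD1 x b) xb add1n subn1 /= card_set_sumb.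
  by apply: eq_bigr => y _; rewrite !inE andbC.
move: count; rewrite sum_nat_const cardsC1 card_ord -subn1 v_eq mulnC => /eqP.
by rewrite eqn_mul2r => /orP[/eqP m1|/eqP <-] //; lia.
Qed.

Lemma steiner_card_blocks : #|{: blocks B}| * m = v * n.+1.
Proof.
rewrite card_sig -sum_nat_const.
transitivity (\sum_(b in [pred b | b \in B]) \sum_x (x \in b : nat)).
  apply: eq_bigr => b bB; rewrite -(proj1 B_steiner b bB) -sum1_card big_mkcond.
  by apply: eq_bigr => x _; case: (x \in b).
rewrite exchange_big /= -[v in RHS]card_ord -sum_nat_const; apply: eq_bigr => x _.
rewrite -(steiner_replication x) card_set_sumb big_mkcond /=.
by apply: eq_bigr => b _; rewrite inE; case: (b \in B).
Qed.

Lemma block_graph_regular b0 : #|[set c | block_graph B b0 c]| = m * n.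
Proof.
set b := val b0; have bB : b \in B := valP b0.
have -> : #|[set c | block_graph B b0 c]| =
    #|[set c | (c \in B) && (b != c) && (b :&: c != set0)]|.
  rewrite -(card_imset _ val_inj); apply: eq_card => c; rewrite [in RHS]inE.
  apply/imsetP/idP => [[c0]|/andP[/andP[cB bc] bc0]].
    rewrite inE /block_graph => /andP[b0c0 meet] ->.
    by rewrite (valP c0) /b val_eqE b0c0 meet.
  by exists (exist _ c cB); rewrite // inE /block_graph /= bc0 andbT.
rewrite card_set_sumb.
transitivity (\sum_c \sum_(x in b) ((c \in B) && (b != c) && (x \in c) : nat)).
  apply: eq_bigr => c _.
  have [/andP[cB bc]|] /= := boolP ((c \in B) && (b != c)); last by rewrite big1.
  have meet_le1 : #|b :&: c| <= 1.
    apply/card_le1_eqP => x y; rewrite !inE => /andP[xb xc] /andP[yb yc].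
    by apply: contraNeq bc => xy; rewrite (steiner_block_eq bB cB xy yb xb yc xc).
  have -> : \sum_(x in b) (x \in c : nat) = #|b :&: c|.
    rewrite -sum1_card big_mkcond [RHS]big_mkcond /=; apply: eq_bigr => x _.
    by rewrite inE; case: (x \in b); case: (x \in c).
  by rewrite -card_gt0; case: #|_| meet_le1 => [|[]].
rewrite exchange_big /= -(proj1 B_steiner b bB) -sum_nat_const; apply: eq_bigr => x xb.
have := steiner_replication x; rewrite card_set_sumb (bigD1 b) //= bB xb /= add1n => -[<-].
rewrite (bigD1 b) //= eqxx andbF /= add0n.
by apply: eq_bigr => c cb; rewrite eq_sym cb andbT.
Qed.

End SteinerSystem.

Lemma regular_degree_uniq (V : finType) (E : rel V) k k' : 0 < #|V| ->
  (forall x, #|[set y | E x y]| = k) -> (forall x, #|[set y | E x y]| = k') -> k = k'.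
Proof. by case/card_gt0P => x _ Ek Ek'; rewrite -(Ek x) Ek'. Qed.

End Counting.

Section Families.
Variables (V : finType) (E : rel V) (m k e d : nat).
Hypothesis E_simple : simple_graph E.
Hypothesis E_regular : forall x, #|[set y | E x y]| = k.
Hypothesis E_adj_common : forall x y, E x y -> #|[set z | E x z && E y z]| = e.
Hypothesis E_nonadj_common :
  forall x y, x != y -> ~~ E x y -> #|[set z | E x z && E y z]| = d.
Hypothesis m_ge2 : (1 < m)%N.
Hypothesis m_eigen : - m%:R \in eigenvalues (adjmx E).
Hypothesis k2_le_N : (k.+2 <= #|V|)%N.
Local Notation N := #|V|.

Let energy_compl_iff r :=
  srg_energy_compl_iff E_simple E_regular E_adj_common E_nonadj_common
    (ltnW m_ge2) m_eigen (r := r) k2_le_N.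

Let degree_eq k' : (forall x, #|[set y | E x y]| = k') -> k = k'.
Proof. by apply: regular_degree_uniq E_regular; lia. Qed.

Lemma Kmult_energy_compl_iff a : (0 < a)%N -> graph_iso E (Kmult a m) ->
  graph_energy E = graph_energy (compl_graph E) <-> a = m.
Proof.
move=> a_gt0 iso.
have N_eq : N = (a * m)%N by rewrite (graph_iso_card iso) Kmult_card.
have k_eq : k = ((a - 1) * m)%N := degree_eq (graph_iso_regular iso (@Kmult_regular a m)).
have a1 : (a - 1)%:R = a%:R - 1 :> algC by rewrite natrB.
apply: (iff_trans (energy_compl_iff (r := 0) _ _)); rewrite ?lexx // N_eq k_eq !natrM a1.
  by ring.
have m_neq0 : m%:R != 0 :> algC by rewrite pnatr_eq0; lia.
apply: (iff_trans (eq_iff_scaled (u := a%:R) (v := m%:R) m_neq0 _)); first by ring.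
by split=> [/eqP|->//]; rewrite eqr_nat => /eqP.
Qed.

Lemma LS_graph_energy_compl n (O : 'I_m -> 'I_(n ^ 2) -> 'I_n) :
  is_OA O -> graph_iso E (LS_graph O) ->
  (1 < n)%N /\ graph_energy E = graph_energy (compl_graph E).
Proof.
move=> O_OA iso.
have N_eq : N = (n ^ 2)%N by rewrite (graph_iso_card iso) card_ord.
have k_eq : k = (m * (n - 1))%N :=
  degree_eq (graph_iso_regular iso (LS_graph_regular O_OA m_ge2)).
have m_le_n : (m <= n)%N by move: k2_le_N; rewrite N_eq k_eq; nia.
split; first by lia.
have casts : (n - 1)%:R = n%:R - 1 :> algC /\ (n - m)%:R = n%:R - m%:R :> algC.
  by rewrite !natrB //; lia.
(* the restricted eigenvalue of [LS_m(n)] is [n - m] *)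
apply/(energy_compl_iff (r := (n - m)%:R)); rewrite ?ler0n //.
all: by rewrite N_eq k_eq natrX !natrM !casts.1 casts.2; ring.
Qed.

Lemma block_graph_energy_compl_neq n (B : {set {set 'I_(m * n + m - n)}}) :
  steiner2 m B -> graph_iso E (block_graph B) ->
  graph_energy E <> graph_energy (compl_graph E).
Proof.
move=> B_steiner iso.
have v_eq : (m * n + m - n - 1 = (m - 1) * n.+1)%N by nia.
have Nm_eq : (N * m = (m * n + m - n) * n.+1)%N.
  by rewrite (graph_iso_card iso) (steiner_card_blocks m_ge2 B_steiner v_eq).
have k_eq : k = (m * n)%N :=
  degree_eq (graph_iso_regular iso (block_graph_regular m_ge2 B_steiner v_eq)).
(* otherwise Fisher's inequality gives N <= k + 1: the block graph would be complete *)
have m_le_n : (m <= n)%N by move: k2_le_N Nm_eq; rewrite k_eq; nia.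
have casts : (n - m)%:R = n%:R - m%:R :> algC /\
    (m * n + m - n)%:R = m%:R * n%:R + m%:R - n%:R :> algC.
  by rewrite !natrB ?natrD ?natrM //; nia.
have Nm : N%:R * m%:R = (m%:R * n%:R + m%:R - n%:R) * (n%:R + 1) :> algC.
  by rewrite -natrM Nm_eq natrM casts.2 -natr1.
(* the restricted eigenvalue is again [n - m] *)
have r_def : (n - m)%:R * (m%:R * (N%:R - 1) - k%:R) = k%:R * (N%:R - k%:R - m%:R) :> algC.
  apply/eqP; rewrite -subr_eq0 k_eq natrM casts.1; apply/eqP.
  transitivity (- m%:R * (N%:R * m%:R - (m%:R * n%:R + m%:R - n%:R) * (n%:R + 1)) : algC).
    by ring.
  by rewrite Nm subrr mulr0.
move=> /(energy_compl_iff r_def (ler0n _ _)); rewrite k_eq natrM casts.1 => crit.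
have : (n * (n.+1 - m))%:R = 0 :> algC.
  rewrite natrM natrB; last by lia.
  transitivity (m%:R * n%:R * (N%:R - m%:R * n%:R + (n%:R - m%:R))
    - (N%:R - 1 - m%:R * n%:R) * (m%:R * n%:R + m%:R)
    + (N%:R * m%:R - (m%:R * n%:R + m%:R - n%:R) * (n%:R + 1)) : algC).
    by rewrite -natr1; ring.
  by rewrite crit Nm !subrr addr0.
by move/eqP; rewrite pnatr_eq0 muln_eq0; lia.
Qed.

End Families.

Theorem mainTheorem10 (m : nat) (hm : (2 <= m)%N) (V : finType) (E : rel V)
  (Hsrg : is_srg E)
  (Hmin : smallest_eigenvalue (adjmx E) (- (m%:R)))
  (Hclass :
     (exists a : nat, (2 <= a)%N /\ graph_iso E (Kmult a m)) \/
     (exists (n : nat) (O : 'I_m -> 'I_(n ^ 2) -> 'I_n),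
        is_OA O /\ graph_iso E (LS_graph O)) \/
     (exists (n : nat) (B : {set {set 'I_(m * n + m - n)}}),
        steiner2 m B /\ graph_iso E (block_graph B))) :
  graph_energy E = graph_energy (compl_graph E) <->
  (graph_iso E (Kmult m m) \/
   exists (n : nat) (O : 'I_m -> 'I_(n ^ 2) -> 'I_n),
     (2 <= n)%N /\ is_OA O /\ graph_iso E (LS_graph O)).
Proof.
have [E_simple [_ [[x [y /andP[xy nExy]]] [k [e [d [E_reg [E_adj E_nonadj]]]]]]]] := Hsrg.
have k2_le_N := regular_nonadj_card E_simple E_reg xy nExy.
(* of the smallest-eigenvalue hypothesis only [- m \in eigenvalues] is needed *)
have m_eigen := Hmin.1.
have Kmult_iff := Kmult_energy_compl_iff E_simple E_reg E_adj E_nonadj hm m_eigen k2_le_N.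
have LS_energy := LS_graph_energy_compl E_simple E_reg E_adj E_nonadj hm m_eigen k2_le_N.
split=> [energy_eq|[iso|[n [O [_ [O_OA iso]]]]]].
- case: Hclass => [[a [a_ge2 iso]]|[[n [O [O_OA iso]]]|[n [B [B_steiner iso]]]]].
  + by have a_eq := (Kmult_iff a (ltnW a_ge2) iso).1 energy_eq; left; rewrite a_eq in iso.
  + by right; exists n, O; split; first exact: (LS_energy n O O_OA iso).1.
  + by case: (block_graph_energy_compl_neq E_simple E_reg E_adj E_nonadj hm m_eigen
      k2_le_N B_steiner iso).
- exact/(Kmult_iff m (ltnW hm) iso).
- exact: (LS_energy n O O_OA iso).2.
Qed.
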